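(* When $m=2$, the bound $R_{ach}(\mathbf{D})$ of the simultaneous-decoding achievability theorem satisfies $$R_{ach}(\mathbf{D})\le R^T(\mathbf{D})=\min\Big[\max_{i\in\{1,2\}}I(X;U_{\{1,2\}}|Y_i)+I(X;U_{\{1\}}|U_{\{1,2\}},Y_1)+I(X;U_{\{2\}}|U_{\{1,2\}},Y_2)\Big],$$ where the minimum is over joint distributions of $(U_{\{1,2\}},U_{\{1\}},U_{\{2\}},X,Y_1,Y_2)$ with finite-alphabet auxiliaries such that the marginal of $(X,Y_1,Y_2)$ is the given one, $(U_{\{1,2\}},U_{\{1\}},U_{\{2\}})\leftrightarrow X\leftrightarrow(Y_1,Y_2)$, and there exist functions $g_l$ with $E[d_l(X,g_l(U_{\{1,2\}},U_{\{l\}},Y_l))]\le D_l$ for $l=1,2$.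
   Context: Finite-alphabet setting: source $X$, side informations $Y_1,Y_2$ at two decoders, distortion measures $d_l$, constraints $D_l$. $R_{ach}(\mathbf{D})$ is the lower convex envelope in $\mathbf{D}$ of $R'_{ach}(\mathbf{D})=\min_v\inf_p\inf\sum_j R_{\mathcal{S}_j}$ where: $v=(\mathcal{S}_1,\mathcal{S}_2,\mathcal{S}_3)$ ranges over orderings of the nonempty subsets of $\{1,2\}$; $p$ ranges over joint distributions of finite-alphabet $(U_{\mathcal{S}_1},U_{\mathcal{S}_2},U_{\mathcal{S}_3})$ with $(X,Y_1,Y_2)$ having the given $(X,Y_1,Y_2)$-marginal, with $\mathcal{U}\leftrightarrow X\leftrightarrow(Y_1,Y_2)$ and functions $g_l(U_{\mathcal{D}_l},Y_l)$ meeting $E d_l\le D_l$; and the inner infimum is over nonnegative $R_{\mathcal{S}_j},R'_{\mathcal{S}_j}$ with $R_{\mathcal{S}_j}+R'_{\mathcal{S}_j}\ge I(X,U^-_{\mathcal{S}_j};U_{\mathcal{S}_j})$ and, for each $l$ and nonempty $\mathcal{D}'_l\subseteq\mathcal{D}_l$, $\sum_{\mathcal{S}_j\in\mathcal{D}'_l}R'_{\mathcal{S}_j}\le\sum_{\mathcal{S}_j\in\mathcal{D}'_l}H(U_{\mathcal{S}_j})-H(U_{\mathcal{D}'_l}|U_{\mathcal{D}_l\setminus\mathcal{D}'_l},Y_l)$. Here $\mathcal{D}_l=\{\mathcal{S}:l\in\mathcal{S}\}$, $U_{\mathcal{D}'}=\{U_\mathcal{S}:\mathcal{S}\in\mathcal{D}'\}$,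 $U^-_{\mathcal{S}_j}=\{U_{\mathcal{S}_i}:i<j\}$. *)

From mathcomp Require Import all_boot.
From Stdlib Require Import Reals.
Set Implicit Arguments. Unset Strict Implicit. Unset Printing Implicit Defensive.

Local Open Scope R_scope.

Definition rsum (T : finType) (F : T -> R) : R := \big[Rplus/R0]_(t : T) F t.
Definition rsum_in (T : finType) (A : {set T}) (F : T -> R) : R :=
  \big[Rplus/R0]_(t in A) F t.

Definition pmf (T : finType) (p : T -> R) : Prop :=
  (forall t, 0 <= p t) /\ rsum p = 1.

Definition distr (O A : finType) (p : O -> R) (f : O -> A) (a : A) : R :=
  rsum (fun w => if f w == a then p w else 0).

Definition pairv (O A B : Type) (f : O -> A) (g : O -> B) : O -> A * B :=
  fun w => (f w, g w).

Definition xlnx (x : R) : R := if Rlt_dec 0 x then x * ln x else 0.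

Definition entropy (O A : finType) (p : O -> R) (f : O -> A) : R :=
  - rsum (fun a => xlnx (distr p f a)).
Definition centropy (O A B : finType) (p : O -> R) (f : O -> A) (g : O -> B) : R :=
  entropy p (pairv f g) - entropy p g.
Definition mutinfo (O A B : finType) (p : O -> R) (f : O -> A) (g : O -> B) : R :=
  entropy p f - centropy p f g.
Definition cmutinfo (O A B C : finType) (p : O -> R)
  (f : O -> A) (g : O -> B) (h : O -> C) : R :=
  centropy p f h - centropy p f (pairv g h).
Definition expect (O : finType) (p : O -> R) (F : O -> R) : R :=
  rsum (fun w => p w * F w).
Definition markov (O A B C : finType) (p : O -> R)
  (f : O -> A) (g : O -> B) (h : O -> C) : Prop :=
  forall a b c, distr p (pairv (pairv f g) h) (a, b, c) * distr p g b
              = distr p (pairv f g) (a, b) * distr p (pairv g h) (b, c).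

Definition Omega (U1 U2 U12 TX TY1 TY2 : finType) : finType :=
  (U1 * U2 * U12 * (TX * TY1 * TY2))%type.

Section Proj.
Variables (U1 U2 U12 TX TY1 TY2 : finType).
Local Notation O := (Omega U1 U2 U12 TX TY1 TY2).
Definition pu1 (w : O) : U1 := w.1.1.1.
Definition pu2 (w : O) : U2 := w.1.1.2.
Definition pu12 (w : O) : U12 := w.1.2.
Definition px (w : O) : TX := w.2.1.1.
Definition py1 (w : O) : TY1 := w.2.1.2.
Definition py2 (w : O) : TY2 := w.2.2.
End Proj.

(* ---------- subsets of {1,2}: decoder 1 is ord0, decoder 2 is ord_max ---------- *)
Definition s1 : {set 'I_2} := [set ord0].
Definition s2 : {set 'I_2} := [set ord_max].
Definition s12 : {set 'I_2} := [set: 'I_2].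

Definition Dl (l : 'I_2) : {set {set 'I_2}} := [set S : {set 'I_2} | l \in S].

(* U_M = { U_S : S \in M } as one random variable (absent components are None) *)
Definition uvar (U1 U2 U12 TX TY1 TY2 : finType) (M : {set {set 'I_2}})
  (w : Omega U1 U2 U12 TX TY1 TY2) : option U1 * option U2 * option U12 :=
  (if s1 \in M then Some (pu1 w) else None,
   if s2 \in M then Some (pu2 w) else None,
   if s12 \in M then Some (pu12 w) else None).

Section Coding.
Variables (TX TY1 TY2 Xh1 Xh2 : finType).
Variable P : TX * TY1 * TY2 -> R.
Variable d1 : TX -> Xh1 -> R.
Variable d2 : TX -> Xh2 -> R.

Definition valid_joint (U1 U2 U12 : finType) (p : Omega U1 U2 U12 TX TY1 TY2 -> R) : Prop :=
  pmf p /\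
  (forall x y1 y2, distr p (fun w => (px w, py1 w, py2 w)) (x, y1, y2) = P (x, y1, y2)) /\
  markov p (fun w => (pu1 w, pu2 w, pu12 w)) (@px _ _ _ _ _ _) (fun w => (py1 w, py2 w)).

(* existence of g_l(U_{D_l}, Y_l) = g_l(U_{l}, U_{12}, Y_l) with E d_l <= D_l *)
Definition dist_ok (U1 U2 U12 : finType) (p : Omega U1 U2 U12 TX TY1 TY2 -> R)
  (D : R * R) : Prop :=
  exists (g1 : U1 -> U12 -> TY1 -> Xh1) (g2 : U2 -> U12 -> TY2 -> Xh2),
    expect p (fun w => d1 (px w) (g1 (pu1 w) (pu12 w) (py1 w))) <= D.1 /\
    expect p (fun w => d2 (px w) (g2 (pu2 w) (pu12 w) (py2 w))) <= D.2.

(* U^-_S : the subsets preceding S in the ordering v *)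
Definition prevset (v : seq {set 'I_2}) (S : {set 'I_2}) : {set {set 'I_2}} :=
  [set T | (T \in v) && ltn (index T v) (index S v)].

Definition dec_constr (U1 U2 U12 : finType) (p : Omega U1 U2 U12 TX TY1 TY2 -> R)
  (l : 'I_2) (Yl : finType) (yl : Omega U1 U2 U12 TX TY1 TY2 -> Yl)
  (Rp : {set 'I_2} -> R) : Prop :=
  forall Dp : {set {set 'I_2}}, Dp != set0 -> Dp \subset Dl l ->
    rsum_in Dp Rp <=
    rsum_in Dp (fun S => entropy p (uvar [set S]))
    - centropy p (uvar Dp) (pairv (uvar (Dl l :\: Dp)) yl).

Definition rate_constraints (U1 U2 U12 : finType) (p : Omega U1 U2 U12 TX TY1 TY2 -> R)
  (v : seq {set 'I_2}) (Rr Rp : {set 'I_2} -> R) : Prop :=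
  (forall S, S != set0 -> 0 <= Rr S /\ 0 <= Rp S) /\
  (forall S, S \in v ->
     mutinfo p (pairv (@px _ _ _ _ _ _) (uvar (prevset v S))) (uvar [set S]) <= Rr S + Rp S) /\
  dec_constr p ord0 (@py1 _ _ _ _ _ _) Rp /\
  dec_constr p ord_max (@py2 _ _ _ _ _ _) Rp.

(* r is one of the values over which R'_ach(D) is the infimum *)
Definition Rprime_val (D : R * R) (r : R) : Prop :=
  exists (U1 U2 U12 : finType) (p : Omega U1 U2 U12 TX TY1 TY2 -> R),
    valid_joint p /\ dist_ok p D /\
    exists (v : seq {set 'I_2}) (Rr Rp : {set 'I_2} -> R),
      perm_eq v [:: s1; s2; s12] /\ rate_constraints p v Rr Rp /\
      r = Rr s1 + Rr s2 + Rr s12.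

(* c = sum_k lam_k r_k with r_k a value for R'_ach(D_k) and sum_k lam_k D_k = D;
   R_ach(D) (lower convex envelope of R'_ach) is the infimum of such c *)
Definition Rach_combo (D : R * R) (c : R) : Prop :=
  exists (n : nat) (lam : 'I_n -> R) (Dk : 'I_n -> R * R) (rk : 'I_n -> R),
    (forall k, 0 <= lam k) /\ rsum lam = 1 /\
    rsum (fun k => lam k * (Dk k).1) = D.1 /\
    rsum (fun k => lam k * (Dk k).2) = D.2 /\
    (forall k, Rprime_val (Dk k) (rk k)) /\
    c = rsum (fun k => lam k * rk k).

Definition Rach_le (D : R * R) (t : R) : Prop :=
  forall eps, 0 < eps -> exists c, Rach_combo D c /\ c <= t + eps.

(* t is one of the values over which R^T(D) is the minimum *)
Definition RT_val (D : R * R) (t : R) : Prop :=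
  exists (U1 U2 U12 : finType) (p : Omega U1 U2 U12 TX TY1 TY2 -> R),
    valid_joint p /\ dist_ok p D /\
    t = Rmax (cmutinfo p (@px _ _ _ _ _ _) (@pu12 _ _ _ _ _ _) (@py1 _ _ _ _ _ _))
             (cmutinfo p (@px _ _ _ _ _ _) (@pu12 _ _ _ _ _ _) (@py2 _ _ _ _ _ _))
        + cmutinfo p (@px _ _ _ _ _ _) (@pu1 _ _ _ _ _ _)
                   (pairv (@pu12 _ _ _ _ _ _) (@py1 _ _ _ _ _ _))
        + cmutinfo p (@px _ _ _ _ _ _) (@pu2 _ _ _ _ _ _)
                   (pairv (@pu12 _ _ _ _ _ _) (@py2 _ _ _ _ _ _)).
End Coding.

From mathcomp Require Import all_boot Rstruct.
From Stdlib Require Import Reals Lra.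
Set Implicit Arguments. Unset Strict Implicit. Unset Printing Implicit Defensive.

(* Start from any test channel (U12, U1, U2) for R^T and resample U2 from its
   conditional law given (U12, X), independently of (U1, Y1, Y2).  The laws of
   (U12, U1, X, Y1) and of (U12, U2, X, Y2) are unchanged (the latter by the Markov
   chain U2 - X - Y2), hence so are the distortions and the value of R^T, while U2
   becomes conditionally independent of (U1, Y1, Y2) given (U12, X).  Then encode
   U12, U1, U2 in this order with binning rates R'_12 = min_l I(U12; Y_l),
   R'_1 = I(U1; U12, Y1), R'_2 = I(U2; U12, Y2) and covering rates
   R_S = I(X, U^-_S; U_S) - R'_S.  The Markov chain U - X - (Y1, Y2) and the
   conditional independence make every constraint a Shannon inequality and turn the
   sum of the R_S into R^T, a single point of the convex envelope R_ach. *)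

Local Open Scope R_scope.

Lemma rsum_pick (A : finType) (a0 : A) (F : A -> R) :
  rsum (fun a => if a0 == a then F a else 0) = F a0.
Proof. by rewrite /rsum -big_mkcond /= (big_pred1 a0). Qed.

Lemma eq_rsum (T : finType) (F G : T -> R) : (forall t, F t = G t) -> rsum F = rsum G.
Proof. by move=> FG; apply: eq_bigr => t _. Qed.

Lemma rsum_ge0 (T : finType) (F : T -> R) : (forall t, 0 <= F t) -> 0 <= rsum F.
Proof. by move=> F0; apply: (big_ind (fun x => 0 <= x)) => //; [lra | move=> *; lra]. Qed.

Lemma rsum_le (T : finType) (F G : T -> R) : (forall t, F t <= G t) -> rsum F <= rsum G.
Proof. by move=> FG; apply: (big_ind2 (fun x y => x <= y)) => //; [lra | move=> *; lra]. Qed.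

Lemma rsumD (T : finType) (F G : T -> R) : rsum (fun t => F t + G t) = rsum F + rsum G.
Proof. by rewrite /rsum big_split. Qed.

Lemma rsumN (T : finType) (F : T -> R) : rsum (fun t => - F t) = - rsum F.
Proof.
apply: (big_ind2 (fun x y => x = - y)) => [|x1 x2 y1 y2 -> ->|//]; [lra | ring].
Qed.

Lemma rsumZ (T : finType) (F : T -> R) c : rsum (fun t => c * F t) = c * rsum F.
Proof. by rewrite /rsum big_distrr. Qed.

Lemma rsum_pair (A B : finType) (F : A * B -> R) :
  rsum F = rsum (fun a => rsum (fun b => F (a, b))).
Proof. by rewrite /rsum pair_bigA; apply: eq_bigr => -[a b]. Qed.

Lemma rsum_swap (A B : finType) (F : A -> B -> R) :
  rsum (fun a => rsum (fun b => F a b)) = rsum (fun b => rsum (fun a => F a b)).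
Proof. by rewrite /rsum exchange_big. Qed.

Lemma rsum_if0 (T : finType) (b : bool) (F : T -> R) :
  rsum (fun t => if b then F t else 0) = if b then rsum F else 0.
Proof. by case: b => //; rewrite /rsum big1. Qed.

Lemma Rinv_ge0 x : 0 <= x -> 0 <= / x.
Proof.
case/Rle_lt_or_eq_dec => [x0 | <-]; last by rewrite Rinv_0; lra.
exact/Rlt_le/Rinv_0_lt_compat.
Qed.

Lemma ln_le_subr1 x : 0 < x -> ln x <= x - 1.
Proof. by move=> x0; have := exp_ineq1_le (ln x); rewrite exp_ln //; lra. Qed.

Lemma Rmax_subr (c a b : R) : Rmax (c - a) (c - b) = c - Rmin a b.
Proof. by rewrite /Rmax /Rmin; do 2 case: Rle_dec => /= ?; lra. Qed.

(* [ln] extended by [0] on nonpositive arguments, so that [xlnx x = x * lnp x]. *)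
Definition lnp (x : R) : R := if Rlt_dec 0 x then ln x else 0.

Lemma xlnxE x : xlnx x = x * lnp x.
Proof. by rewrite /xlnx /lnp; destruct (Rlt_dec 0 x) => /=; ring. Qed.

Lemma lnpE x : 0 < x -> lnp x = ln x.
Proof. by rewrite /lnp; case: Rlt_dec. Qed.

Section Distributions.
Variables (O : finType) (p : O -> R).

Lemma rsum_distrM (A : finType) (f : O -> A) (G : A -> R) :
  rsum (fun a => distr p f a * G a) = rsum (fun w => p w * G (f w)).
Proof.
rewrite /rsum /distr; under eq_bigr => a _ do rewrite /rsum big_distrl /=.
rewrite exchange_big /=; apply: eq_bigr => w _.
rewrite -(rsum_pick (f w) (fun a => p w * G a)); apply: eq_bigr => a _.
by case: eqP => _ /=; ring.
Qed.

Lemma entropyE (A : finType) (f : O -> A) :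
  entropy p f = - rsum (fun w => p w * lnp (distr p f (f w))).
Proof.
rewrite /entropy -(rsum_distrM f (fun a => lnp (distr p f a))).
by congr (- _); apply: eq_rsum => a; rewrite xlnxE.
Qed.

Lemma eq_entropy (A B : finType) (f : O -> A) (g : O -> B) :
  (forall w w', (f w == f w') = (g w == g w')) -> entropy p f = entropy p g.
Proof.
move=> fg; rewrite !entropyE; congr (- _); apply: eq_rsum => w.
by congr (_ * lnp _); apply: eq_rsum => w'; rewrite fg.
Qed.

Lemma distr_comp (Z Y : finType) (F : O -> Z) (k : Z -> Y) y :
  distr p (fun w => k (F w)) y = rsum (fun z => if k z == y then distr p F z else 0).
Proof.
rewrite /distr; under [RHS]eq_rsum => z do rewrite -rsum_if0.
rewrite rsum_swap; apply: eq_rsum => w.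
rewrite -(rsum_pick (F w) (fun z => if k z == y then p w else 0)).
by apply: eq_rsum => z; case: (k z == y); case: (F w == z).
Qed.

Lemma rsum_distr_fiber (B Z Y : finType) (F : O -> Z) (g : O -> B) (e : B -> Z)
    (P : pred B) (G : O -> Y) (y : Y) :
  (forall w b, P b && (F w == e b) = (G w == y) && (g w == b)) ->
  rsum (fun b => if P b then distr p F (e b) else 0) = distr p G y.
Proof.
move=> FG; under eq_rsum => b do rewrite /distr -rsum_if0.
rewrite rsum_swap /distr; apply: eq_rsum => w.
rewrite (@eq_rsum _ _ (fun b => if (G w == y) && (g w == b) then p w else 0)); last first.
  by move=> b; rewrite -FG; case: (P b).
case: (G w == y) => /=; first exact: (rsum_pick (g w) (fun _ => p w)).
by rewrite /rsum big1.
Qed.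

Lemma distr_marg (A C : finType) (f : O -> A) (h : O -> C) c :
  rsum (fun a => distr p (pairv f h) (a, c)) = distr p h c.
Proof.
rewrite -(rsum_distr_fiber (F := pairv f h) (g := f) (e := fun a => (a, c)) (P := predT)) //.
by move=> w a; rewrite /pairv xpair_eqE /= andbC.
Qed.

Lemma rsum_distr (A : finType) (f : O -> A) : rsum (distr p f) = rsum p.
Proof.
have := rsum_distrM f (fun _ => 1).
by rewrite (eq_rsum (fun _ => Rmult_1_r _)) (eq_rsum (fun _ => Rmult_1_r _)).
Qed.

Hypothesis p0 : forall w, 0 <= p w.

Lemma distr_ge0 (A : finType) (f : O -> A) a : 0 <= distr p f a.
Proof. by apply: rsum_ge0 => w; case: (_ == _); [exact: p0 | lra]. Qed.

Lemma distr_ge_pt (A : finType) (f : O -> A) w : p w <= distr p f (f w).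
Proof.
rewrite /distr /rsum (bigD1 w) //= eqxx.
suff : 0 <= \big[Rplus/R0]_(i | i != w) (if f i == f w then p i else 0) by lra.
by apply: big_ind => [|*|i _]; [lra | lra | case: (_ == _); [exact: p0 | lra]].
Qed.

Lemma distr_gt0_pt (A : finType) (f : O -> A) w : 0 < p w -> 0 < distr p f (f w).
Proof. by have := distr_ge_pt f w; lra. Qed.

Lemma le_distr (A B : finType) (f : O -> A) (g : O -> B) a b :
  (forall w, f w == a -> g w == b) -> distr p f a <= distr p g b.
Proof.
move=> fg; apply: rsum_le => w; case E: (f w == a); first by rewrite (fg w E); lra.
by case: (_ == _); [exact: p0 | lra].
Qed.
End Distributions.

Section DistrEq.
Variables (O Z : finType) (p q : O -> R) (phi : O -> Z).
Hypothesis pq : forall z, distr q phi z = distr p phi z.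

Lemma entropy_eq_distr (Y : finType) (k : Z -> Y) (F : O -> Y) :
  (forall w, F w = k (phi w)) -> entropy q F = entropy p F.
Proof.
move=> Fk; have distrF r y : distr r F y = distr r (fun w => k (phi w)) y.
  by apply: eq_rsum => w; rewrite Fk.
rewrite /entropy; congr (- _); apply: eq_rsum => y; congr xlnx.
by rewrite !distrF !distr_comp; apply: eq_rsum => z; rewrite pq.
Qed.

Lemma expect_eq_distr (k : Z -> R) (F : O -> R) :
  (forall w, F w = k (phi w)) -> expect q F = expect p F.
Proof.
move=> Fk; have expectF r : expect r F = rsum (fun z => distr r phi z * k z).
  by rewrite rsum_distrM /expect; apply: eq_rsum => w; rewrite Fk.
by rewrite !expectF; apply: eq_rsum => z; rewrite pq.
Qed.

End DistrEq.

Section Shannon.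
Variables (O : finType) (p : O -> R).

Lemma markov_map (A B C A' C' : finType) (f : O -> A) (g : O -> B) (h : O -> C)
    (k1 : A -> A') (k2 : C -> C') :
  markov p f g h -> markov p (fun w => k1 (f w)) g (fun w => k2 (h w)).
Proof.
move=> fgh a' b c'.
have E3 : rsum (fun ac : A * C => if (k1 ac.1 == a') && (k2 ac.2 == c')
              then distr p (pairv (pairv f g) h) (ac.1, b, ac.2) else 0)
        = distr p (pairv (pairv (fun w => k1 (f w)) g) (fun w => k2 (h w))) (a', b, c').
  apply: (rsum_distr_fiber p (F := pairv (pairv f g) h) (g := pairv f h)
           (e := fun ac => (ac.1, b, ac.2))) => w [a c] /=.
  rewrite /pairv !xpair_eqE /=.
  case: (f w =P a) => [<-|_]; last by rewrite !andbF.
  case: (h w =P c) => [<-|_]; last by rewrite !andbF.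
  rewrite ?eqxx ?andbT.
  by case: (k1 (f w) == a'); case: (g w == b); case: (k2 (h w) == c').
have E1 : rsum (fun a => if k1 a == a' then distr p (pairv f g) (a, b) else 0)
        = distr p (pairv (fun w => k1 (f w)) g) (a', b).
  apply: (rsum_distr_fiber p (F := pairv f g) (g := f) (e := fun a => (a, b))) => w a /=.
  rewrite /pairv !xpair_eqE /=.
  case: (f w =P a) => [<-|_]; last by rewrite !andbF.
  by rewrite ?eqxx ?andbT; case: (k1 (f w) == a'); case: (g w == b).
have E2 : rsum (fun c => if k2 c == c' then distr p (pairv g h) (b, c) else 0)
        = distr p (pairv g (fun w => k2 (h w))) (b, c').
  apply: (rsum_distr_fiber p (F := pairv g h) (g := h) (e := fun c => (b, c))) => w c /=.
  rewrite /pairv !xpair_eqE /=.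
  case: (h w =P c) => [<-|_]; last by rewrite !andbF.
  by rewrite ?eqxx ?andbT; case: (k2 (h w) == c'); case: (g w == b).
rewrite -E3 -E1 -E2 rsum_pair Rmult_comm -rsumZ [RHS]Rmult_comm -rsumZ.
apply: eq_rsum => a; rewrite -rsumZ [RHS]Rmult_comm -rsumZ; apply: eq_rsum => c /=.
case: (k1 a == a'); case: (k2 c == c') => /=; try ring.
by rewrite Rmult_comm fgh.
Qed.

Hypothesis p0 : forall w, 0 <= p w.

Lemma markov_entropyE (A B C : finType) (f : O -> A) (g : O -> B) (h : O -> C) :
  markov p f g h ->
  entropy p (pairv (pairv f g) h) + entropy p g =
  entropy p (pairv f g) + entropy p (pairv g h).
Proof.
move=> fgh; rewrite !entropyE -!Ropp_plus_distr -!rsumD; congr (- _).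
apply: eq_rsum => w; case: (Rle_lt_or_eq_dec _ _ (p0 w)) => [pw|<-]; last by ring.
have := distr_gt0_pt p0 (pairv (pairv f g) h) pw; have := distr_gt0_pt p0 g pw.
have := distr_gt0_pt p0 (pairv f g) pw; have := distr_gt0_pt p0 (pairv g h) pw.
rewrite /pairv /= => ? ? ? ?; rewrite !lnpE //.
by rewrite -!Rmult_plus_distr_l -!ln_mult // fgh.
Qed.

Hypothesis p1 : rsum p = 1.

Lemma entropy_cst (T : finType) (t : T) : entropy p (fun _ => t) = 0.
Proof.
rewrite entropyE (_ : distr p (fun _ => t) t = 1); last first.
  by rewrite /distr -p1; apply: eq_rsum => w; rewrite eqxx.
rewrite lnpE ?ln_1; last lra.
by rewrite (eq_rsum (fun w => Rmult_0_r (p w))) /rsum big1 //; lra.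
Qed.

Section Submodularity.
Variables (A B C : finType) (f : O -> A) (g : O -> B) (h : O -> C).
Local Notation pfgh := (distr p (pairv (pairv f g) h)).
Local Notation pfh := (distr p (pairv f h)).
Local Notation pgh := (distr p (pairv g h)).
Local Notation ph := (distr p h).

(* The ratio [p(a,c) p(b,c) / (p(a,b,c) p(c))] on the support of [(f, g, h)]; the
   conditional mutual information [I(f; g | h)] is minus its expected logarithm. *)
Definition cmi_ratio (z : A * B * C) : R :=
  if Rlt_dec 0 (pfgh z) then pfh (z.1.1, z.2) * pgh (z.1.2, z.2) / (pfgh z * ph z.2) else 0.

Lemma cmi_ratio_ln_bound w :
  p w * (lnp (pfh (f w, h w)) + lnp (pgh (g w, h w))
         - lnp (pfgh (f w, g w, h w)) - lnp (ph (h w)))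
  <= p w * cmi_ratio (f w, g w, h w) - p w.
Proof.
case: (Rle_lt_or_eq_dec _ _ (p0 w)) => [pw|<-]; last by lra.
have a0 : 0 < pfgh (f w, g w, h w) := distr_gt0_pt p0 (pairv (pairv f g) h) pw.
have b0 : 0 < ph (h w) := distr_gt0_pt p0 h pw.
have c0 : 0 < pfh (f w, h w) := distr_gt0_pt p0 (pairv f h) pw.
have d0 : 0 < pgh (g w, h w) := distr_gt0_pt p0 (pairv g h) pw.
rewrite /cmi_ratio /=; case: Rlt_dec => //= _; rewrite !lnpE //.
move: a0 b0 c0 d0; set a := pfgh _; set b := ph _; set c := pfh _; set d := pgh _.
move=> a0 b0 c0 d0.
have cd_ab : 0 < c * d / (a * b) by apply: Rdiv_lt_0_compat; apply: Rmult_lt_0_compat.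
have ln_cd_ab : ln (c * d / (a * b)) = ln c + ln d - ln a - ln b.
  have cd0 : 0 < c * d by apply: Rmult_lt_0_compat.
  have ab0 : 0 < a * b by apply: Rmult_lt_0_compat.
  have iab0 : 0 < / (a * b) by apply: Rinv_0_lt_compat.
  by rewrite /Rdiv !ln_mult // ln_Rinv // ln_mult //; ring.
have := ln_le_subr1 cd_ab; rewrite ln_cd_ab.
by move/(Rmult_le_compat_l (p w) _ _ (Rlt_le _ _ pw)); rewrite /Rdiv; lra.
Qed.

Lemma expect_cmi_ratio_le1 : rsum (fun w => p w * cmi_ratio (f w, g w, h w)) <= 1.
Proof.
rewrite -(rsum_distrM p (pairv (pairv f g) h) cmi_ratio).
pose q (z : A * B * C) :=
  if Rlt_dec 0 (ph z.2) then pfh (z.1.1, z.2) * pgh (z.1.2, z.2) / ph z.2 else 0.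
have le_q z : pfgh z * cmi_ratio z <= q z.
  case: z => [[a b] c]; rewrite /cmi_ratio /q /=.
  have le_pc : pfgh (a, b, c) <= ph c.
    by apply: le_distr => // w; rewrite /pairv !xpair_eqE => /andP[].
  have := distr_ge0 p0 (pairv f h) (a, c); have := distr_ge0 p0 (pairv g h) (b, c).
  case: Rlt_dec => /= pabc; case: Rlt_dec => /= pc ? ?.
  - by apply: Req_le; field; lra.
  - by lra.
  - by rewrite Rmult_0_r; apply: Rmult_le_pos; [nra | exact/Rlt_le/Rinv_0_lt_compat].
  - by lra.
have sum_q : rsum q = 1.
  rewrite rsum_pair rsum_swap -p1 -(rsum_distr p h); apply: eq_rsum => c.
  rewrite rsum_pair /q /=; case: Rlt_dec => /= pc; last first.
    rewrite /rsum big1 => [|a _]; last by rewrite big1.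
    by have := distr_ge0 p0 h c; lra.
  rewrite (eq_rsum (G := fun a => pfh (a, c) / ph c * rsum (fun b => pgh (b, c)))).
    rewrite (eq_rsum (G := fun a => rsum (fun b => pgh (b, c)) / ph c * pfh (a, c))).
      by rewrite rsumZ !distr_marg; field; lra.
    by move=> a; rewrite /Rdiv; ring.
  by move=> a; rewrite -rsumZ; apply: eq_rsum => b; rewrite /Rdiv; ring.
by apply: Rle_trans (rsum_le le_q) _; rewrite sum_q; lra.
Qed.

(* Gibbs' inequality: [ln x <= x - 1] at [cmi_ratio]. *)
Lemma entropy_submod :
  entropy p (pairv (pairv f g) h) + entropy p h <=
  entropy p (pairv f h) + entropy p (pairv g h).
Proof.
pose l (Z : finType) (F : O -> Z) w := p w * lnp (distr p F (F w)).
have El : rsum (fun w => p w * (lnp (pfh (f w, h w)) + lnp (pgh (g w, h w))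
                   - lnp (pfgh (f w, g w, h w)) - lnp (ph (h w))))
   = rsum (l _ (pairv f h)) + rsum (l _ (pairv g h))
     - rsum (l _ (pairv (pairv f g) h)) - rsum (l _ h).
  by rewrite /Rminus -!rsumN -!rsumD; apply: eq_rsum => w; rewrite /l /pairv /=; ring.
have Er : rsum (fun w => p w * cmi_ratio (f w, g w, h w) - p w)
   = rsum (fun w => p w * cmi_ratio (f w, g w, h w)) - 1.
  by rewrite -p1 /Rminus -rsumN -rsumD.
have := rsum_le cmi_ratio_ln_bound; rewrite El Er.
have := expect_cmi_ratio_le1; rewrite !entropyE /l; lra.
Qed.

End Submodularity.

Lemma cmutinfo_ge0 (A B C : finType) (f : O -> A) (g : O -> B) (h : O -> C) :
  0 <= cmutinfo p f g h.
Proof.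
rewrite /cmutinfo /centropy.
rewrite (@eq_entropy _ _ _ _ (pairv f (pairv g h)) (pairv (pairv f g) h)).
  by have := entropy_submod f g h; lra.
by move=> w w'; rewrite /pairv !xpair_eqE andbA.
Qed.

Lemma mutinfo_ge0 (A B : finType) (f : O -> A) (g : O -> B) : 0 <= mutinfo p f g.
Proof.
have := cmutinfo_ge0 f g (fun _ => tt); rewrite /mutinfo /cmutinfo /centropy entropy_cst.
rewrite (@eq_entropy _ _ _ _ (pairv f (fun _ => tt)) f); last first.
  by move=> w w'; rewrite /pairv xpair_eqE andbT.
rewrite (@eq_entropy _ _ _ _ (pairv f (pairv g (fun _ => tt))) (pairv f g)); last first.
  by move=> w w'; rewrite /pairv !xpair_eqE andbT.
rewrite (@eq_entropy _ _ _ _ (pairv g (fun _ => tt)) g); first lra.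
by move=> w w'; rewrite /pairv xpair_eqE andbT.
Qed.

End Shannon.

Section Resampling.
Variables (U1 U2 U12 TX TY1 TY2 : finType).
Local Notation O := (Omega U1 U2 U12 TX TY1 TY2).
Variable p : O -> R.

Definition pu12x (w : O) := (pu12 w, px w).
Definition pu12u2x (w : O) := (pu12 w, pu2 w, px w).
Definition graft (w1 w2 : O) : O :=
  (pu1 w1, pu2 w2, pu12 w1, (px w1, py1 w1, py2 w1)).

(* Draw [w1] from [p] and [w2] from [p] conditioned on [pu12x w2 = pu12x w1], then
   replace the [U2]-component of [w1] by that of [w2]. *)
Definition resample_weight (w1 w2 : O) : R :=
  p w1 * (if pu12x w2 == pu12x w1 then p w2 else 0) * / distr p pu12x (pu12x w1).

Definition resample_u2 (w : O) : R :=
  rsum (fun w1 => rsum (fun w2 => if graft w1 w2 == w then resample_weight w1 w2 else 0)).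

Lemma distr_resample_u2 (Z : finType) (F : O -> Z) z :
  distr resample_u2 F z =
  rsum (fun w1 =>
    rsum (fun w2 => if F (graft w1 w2) == z then resample_weight w1 w2 else 0)).
Proof.
rewrite /distr /resample_u2.
under eq_rsum => w do rewrite -rsum_if0.
under eq_rsum => w do under eq_rsum => w1 do rewrite -rsum_if0.
rewrite rsum_swap; apply: eq_rsum => w1; rewrite rsum_swap; apply: eq_rsum => w2.
rewrite -(rsum_pick (graft w1 w2) (fun w => if F w == z then resample_weight w1 w2 else 0)).
by apply: eq_rsum => w; case: (F w == z); case: (graft w1 w2 == w).
Qed.

Lemma distr_resample_u2_w1u2 (Z Z1 : finType) (F : O -> Z) (F1 : O -> Z1) z z1 a c x :
  (forall w1 w2, (F (graft w1 w2) == z) = (F1 w1 == z1) && (pu2 w2 == c)) ->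
  (forall w1, F1 w1 == z1 -> pu12x w1 = (a, x)) ->
  distr resample_u2 F z =
  distr p F1 z1 * (distr p pu12u2x (a, c, x) * / distr p pu12x (a, x)).
Proof.
move=> FF1 F1ax; rewrite distr_resample_u2 /distr Rmult_comm -rsumZ; apply: eq_rsum => w1.
under eq_rsum => w2 do rewrite FF1.
case E: (F1 w1 == z1) => /=; last by rewrite /rsum big1 //; ring.
rewrite /resample_weight (F1ax w1 E).
transitivity (rsum (fun w2 => (p w1 * / distr p pu12x (a, x)) *
                              (if pu12u2x w2 == (a, c, x) then p w2 else 0))).
  apply: eq_rsum => w2; rewrite /pu12u2x /pu12x !xpair_eqE.
  by case: (pu2 w2 == c); case: (pu12 w2 == a); case: (px w2 == x) => /=; ring.
by rewrite rsumZ -/(distr p pu12u2x (a, c, x)) -/(distr p pu12x (a, x)); ring.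
Qed.

Hypothesis p0 : forall w, 0 <= p w.

Lemma resample_u2_ge0 w : 0 <= resample_u2 w.
Proof.
apply: rsum_ge0 => w1; apply: rsum_ge0 => w2; case: (_ == _); last lra.
apply: Rmult_le_pos; last exact/Rinv_ge0/distr_ge0.
by apply: Rmult_le_pos => //; case: (_ == _) => //; lra.
Qed.

Lemma distr_resample_u2_w1 (Z Z1 : finType) (F : O -> Z) (F1 : O -> Z1) z z1 :
  (forall w1 w2, (F (graft w1 w2) == z) = (F1 w1 == z1)) ->
  distr resample_u2 F z = distr p F1 z1.
Proof.
move=> FF1; rewrite distr_resample_u2 /distr; apply: eq_rsum => w1.
under eq_rsum => w2 do rewrite FF1.
case: (F1 w1 == z1); last by rewrite /rsum big1.
have := distr_ge_pt p0 pu12x w1; set s := distr p pu12x _ => ps.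
transitivity (p w1 * / s * s).
  rewrite -/(distr p pu12x (pu12x w1)) -/s -rsumZ; apply: eq_rsum => w2.
  by rewrite /resample_weight -/s; case: (_ == _); ring.
have : 0 <= s := distr_ge0 p0 pu12x (pu12x w1).
case/Rle_lt_or_eq_dec => [s0 | s0]; first by field; lra.
by have := p0 w1; rewrite -s0 Rmult_0_r in ps *; lra.
Qed.

Definition view1 (w : O) := (pu12 w, pu1 w, px w, py1 w).
Definition view2 (w : O) := (pu12 w, pu2 w, px w, py2 w).
Definition pu1y (w : O) := (pu1 w, (py1 w, py2 w)).

Lemma resample_u2_sum : rsum resample_u2 = rsum p.
Proof.
transitivity (distr resample_u2 (fun _ => tt) tt); first by apply: eq_rsum.
by rewrite (distr_resample_u2_w1 (F1 := fun _ => tt) (z1 := tt)).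
Qed.

Lemma distr_resample_u2_xy z :
  distr resample_u2 (fun w => (px w, py1 w, py2 w)) z =
  distr p (fun w => (px w, py1 w, py2 w)) z.
Proof. exact: distr_resample_u2_w1. Qed.

Lemma distr_resample_u2_view1 z : distr resample_u2 view1 z = distr p view1 z.
Proof. exact: distr_resample_u2_w1. Qed.

Lemma resample_u2_condind : markov resample_u2 pu1y pu12x (@pu2 _ _ _ _ _ _).
Proof.
move=> [b [y1 y2]] [a x] c.
rewrite (distr_resample_u2_w1u2 (F := pairv (pairv pu1y pu12x) (@pu2 _ _ _ _ _ _))
    (F1 := pairv pu1y pu12x) (z1 := (b, (y1, y2), (a, x))) (a := a) (c := c) (x := x));
  first last.
- by move=> w1; rewrite /pairv !xpair_eqE => /andP [_ /andP [/eqP <- /eqP <-]].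
- move=> w1 w2; rewrite /pairv /graft /pu1y /pu12x /= !xpair_eqE.
  by case: (pu1 w1 == b); case: (pu2 w2 == c); case: (pu12 w1 == a); case: (px w1 == x);
     case: (py1 w1 == y1); case: (py2 w1 == y2).
rewrite (distr_resample_u2_w1u2 (F := pairv pu12x (@pu2 _ _ _ _ _ _)) (F1 := pu12x)
    (z1 := (a, x)) (a := a) (c := c) (x := x)); first last.
- by move=> w1 /eqP.
- move=> w1 w2; rewrite /pairv /graft /pu12x /= !xpair_eqE.
  by case: (pu2 w2 == c); case: (pu12 w1 == a); case: (px w1 == x).
rewrite (distr_resample_u2_w1 (F1 := pu12x) (z1 := (a, x))) //.
rewrite (distr_resample_u2_w1 (F1 := pairv pu1y pu12x) (z1 := (b, (y1, y2), (a, x)))) //.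
by ring.
Qed.

Hypothesis pm :
  markov p (fun w => (pu1 w, pu2 w, pu12 w)) (@px _ _ _ _ _ _) (fun w => (py1 w, py2 w)).

(* Both sides factor as [p(a,x,y2) p(a,c,x) / p(a,x)], by [U2 <-> X <-> Y2]. *)
Lemma distr_resample_u2_view2 z : distr resample_u2 view2 z = distr p view2 z.
Proof.
case: z => [[[a c] x] y2].
rewrite (distr_resample_u2_w1u2 (F1 := fun w => (pu12 w, px w, py2 w)) (z1 := (a, x, y2))
           (a := a) (c := c) (x := x)); first last.
- by move=> w1; rewrite !xpair_eqE => /andP [/andP [/eqP <- /eqP <-] _].
- move=> w1 w2; rewrite /view2 /graft /= !xpair_eqE.
  by case: (pu12 w1 == a); case: (pu2 w2 == c); case: (px w1 == x); case: (py2 w1 == y2).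
set pv := distr p view2 _; set pay := distr p (fun w => (pu12 w, px w, py2 w)) _.
set pacx := distr p pu12u2x _; set pax := distr p pu12x _.
set pxx := distr p (@px _ _ _ _ _ _) x.
set pxy := distr p (fun w : O => (px w, py2 w)) (x, y2).
have Mv : pv * pxx = pacx * pxy :=
  markov_map (fun u => (u.2, u.1.2)) (fun y => y.2) pm (a, c) x y2.
have Ma : pay * pxx = pax * pxy := markov_map (fun u => u.2) (fun y => y.2) pm a x y2.
have pacx_le : pacx <= pax.
  apply: le_distr => // w; rewrite /pu12u2x /pu12x !xpair_eqE.
  by move=> /andP [/andP [-> _] ->].
have pv_le : pv <= pacx.
  by apply: le_distr => // w; rewrite /view2 /pu12u2x !xpair_eqE => /andP [-> _].
have pax_le : pax <= pxx.
  by apply: le_distr => // w; rewrite /pu12x !xpair_eqE => /andP [_ ->].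
have := distr_ge0 p0 view2 (a, c, x, y2); have := distr_ge0 p0 pu12u2x (a, c, x).
have : 0 <= pax := distr_ge0 p0 pu12x (a, x).
rewrite -/pv -/pacx; clearbody pv pay pacx pax pxx pxy.
case/Rle_lt_or_eq_dec => pax0 pacx0 pv0; last first.
  have -> : pacx = 0 by lra.
  have -> : pv = 0 by lra.
  by ring.
apply: (Rmult_eq_reg_r pxx); last by apply: Rgt_not_eq; lra.
rewrite Mv (_ : _ * pxx = pacx * / pax * (pay * pxx)); last by ring.
by rewrite Ma; field; apply: Rgt_not_eq.
Qed.

Lemma resample_u2_markov :
  markov resample_u2 (fun w => (pu1 w, pu2 w, pu12 w)) (@px _ _ _ _ _ _)
    (fun w => (py1 w, py2 w)).
Proof.
move=> [[b c] a] x [y1 y2].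
rewrite (distr_resample_u2_w1u2 (F1 := fun w => (pu1 w, pu12 w, px w, (py1 w, py2 w)))
           (z1 := (b, a, x, (y1, y2))) (a := a) (c := c) (x := x)); first last.
- by move=> w1; rewrite !xpair_eqE => /andP [/andP [/andP [_ /eqP <-] /eqP <-] _].
- move=> w1 w2; rewrite /pairv /graft /= !xpair_eqE.
  by case: (pu1 w1 == b); case: (pu2 w2 == c); case: (pu12 w1 == a); case: (px w1 == x);
     case: (py1 w1 == y1); case: (py2 w1 == y2).
rewrite (distr_resample_u2_w1u2
    (F := pairv (fun w => (pu1 w, pu2 w, pu12 w)) (@px _ _ _ _ _ _))
    (F1 := fun w => (pu1 w, pu12 w, px w)) (z1 := (b, a, x)) (a := a) (c := c) (x := x));
  first last.
- by move=> w1; rewrite !xpair_eqE => /andP [/andP [_ /eqP <-] /eqP <-].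
- move=> w1 w2; rewrite /pairv /graft /= !xpair_eqE.
  by case: (pu1 w1 == b); case: (pu2 w2 == c); case: (pu12 w1 == a); case: (px w1 == x).
rewrite (distr_resample_u2_w1 (F1 := @px _ _ _ _ _ _) (z1 := x)) //.
rewrite (distr_resample_u2_w1 (F1 := fun w => (px w, (py1 w, py2 w))) (z1 := (x, (y1, y2)))) //.
have M : distr p (fun w => (pu1 w, pu12 w, px w, (py1 w, py2 w))) (b, a, x, (y1, y2)) *
          distr p (@px _ _ _ _ _ _) x =
        distr p (fun w => (pu1 w, pu12 w, px w)) (b, a, x) *
          distr p (fun w => (px w, (py1 w, py2 w))) (x, (y1, y2)) :=
  markov_map (fun u => (u.1.1, u.2)) (fun y => y) pm (b, a) x (y1, y2).
by rewrite Rmult_assoc [_ * distr p _ x]Rmult_comm -Rmult_assoc M; ring.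
Qed.

End Resampling.

Arguments pu12x {U1 U2 U12 TX TY1 TY2}.
Arguments pu12u2x {U1 U2 U12 TX TY1 TY2}.
Arguments view1 {U1 U2 U12 TX TY1 TY2}.
Arguments view2 {U1 U2 U12 TX TY1 TY2}.
Arguments pu1y {U1 U2 U12 TX TY1 TY2}.

Definition mask := (bool * bool * bool * bool * bool * bool)%type.

Section Subvectors.
Variables (U1 U2 U12 TX TY1 TY2 : finType).

Definition subvec (m : mask) (w : Omega U1 U2 U12 TX TY1 TY2) :=
  let: (a, b, c, x, y1, y2) := m in
  (if a then Some (pu12 w) else None, if b then Some (pu1 w) else None,
   if c then Some (pu2 w) else None, if x then Some (px w) else None,
   if y1 then Some (py1 w) else None, if y2 then Some (py2 w) else None).

End Subvectors.

Definition mask_or (m m' : mask) : mask :=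
  let: (a, b, c, x, y1, y2) := m in let: (a', b', c', x', y1', y2') := m' in
  (a || a', b || b', c || c', x || x', y1 || y1', y2 || y2').

Lemma Some_eqE (T : eqType) (x y : T) : (Some x == Some y) = (x == y).
Proof. by []. Qed.

Lemma None_eqE (T : eqType) : (@None T == None) = true.
Proof. by []. Qed.

Arguments subvec : simpl never.
Arguments entropy : simpl never.
Arguments distr : simpl never.

Ltac mentions F t := match F with context [t] => constr:(true) | _ => constr:(false) end.

(* Syntactic: a coordinate is selected iff its projection occurs in [F]. *)
Ltac mask_of F :=
  lazymatch F with
  | subvec ?m => m
  | pairv ?f ?g =>
      let m := mask_of f in let m' := mask_of g in eval compute in (mask_or m m')
  | _ =>
      let a := mentions F (@pu12) in let b := mentions F (@pu1) in
      let c := mentions F (@pu2) in let x := mentions F (@px) in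
      let y1 := mentions F (@py1) in let y2 := mentions F (@py2) in
      constr:((a, b, c, x, y1, y2))
  end.

(* Rewrites every entropy to the form [entropy p (subvec m)], so that [lra] can combine
   information (in)equalities stated about different but equally informative random
   variables. *)
Ltac canon_entropies :=
  rewrite /mutinfo /cmutinfo /centropy;
  repeat match goal with |- context [entropy ?p ?F] =>
    lazymatch F with
    | subvec _ => fail
    | _ => let m := mask_of F in
      rewrite (@eq_entropy _ p _ _ F (subvec m)); last first;
      [move=> w w'; rewrite /subvec /pairv /= ?xpair_eqE ?Some_eqE ?None_eqE /=;
       rewrite ?andbT ?andTb;
       repeat match goal with |- context [?x == ?y] => case: (x == y) end; done|]
    end end.

Definition RT_rate (U1 U2 U12 TX TY1 TY2 : finType)
    (p : Omega U1 U2 U12 TX TY1 TY2 -> R) : R :=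
  Rmax (cmutinfo p (@px _ _ _ _ _ _) (@pu12 _ _ _ _ _ _) (@py1 _ _ _ _ _ _))
       (cmutinfo p (@px _ _ _ _ _ _) (@pu12 _ _ _ _ _ _) (@py2 _ _ _ _ _ _))
  + cmutinfo p (@px _ _ _ _ _ _) (@pu1 _ _ _ _ _ _)
      (pairv (@pu12 _ _ _ _ _ _) (@py1 _ _ _ _ _ _))
  + cmutinfo p (@px _ _ _ _ _ _) (@pu2 _ _ _ _ _ _)
      (pairv (@pu12 _ _ _ _ _ _) (@py2 _ _ _ _ _ _)).

Section ResampledJoint.
Variables (U1 U2 U12 TX TY1 TY2 : finType).
Local Notation O := (Omega U1 U2 U12 TX TY1 TY2).
Variable p : O -> R.
Hypothesis p0 : forall w, 0 <= p w.

Lemma entropy_resample_u2_view1 a b x y1 :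
  entropy (resample_u2 p) (subvec (a, b, false, x, y1, false)) =
  entropy p (subvec (a, b, false, x, y1, false)).
Proof.
apply: (entropy_eq_distr (distr_resample_u2_view1 p0)
  (k := fun z => (if a then Some z.1.1.1 else None, if b then Some z.1.1.2 else None, None,
                  if x then Some z.1.2 else None, if y1 then Some z.2 else None, None))).
by [].
Qed.

Hypothesis pm :
  markov p (fun w => (pu1 w, pu2 w, pu12 w)) (@px _ _ _ _ _ _) (fun w => (py1 w, py2 w)).

Lemma entropy_resample_u2_view2 a c x y2 :
  entropy (resample_u2 p) (subvec (a, false, c, x, false, y2)) =
  entropy p (subvec (a, false, c, x, false, y2)).
Proof.
apply: (entropy_eq_distr (distr_resample_u2_view2 p0 pm)
  (k := fun z => (if a then Some z.1.1.1 else None, None, if c then Some z.1.1.2 else None,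
                  if x then Some z.1.2 else None, None, if y2 then Some z.2 else None))).
by [].
Qed.

Lemma RT_rate_resample_u2 : RT_rate (resample_u2 p) = RT_rate p.
Proof.
rewrite /RT_rate; canon_entropies.
by rewrite !entropy_resample_u2_view1 !entropy_resample_u2_view2.
Qed.

End ResampledJoint.

Section Coding.
Variables (TX TY1 TY2 Xh1 Xh2 : finType) (P : TX * TY1 * TY2 -> R).
Variables (d1 : TX -> Xh1 -> R) (d2 : TX -> Xh2 -> R).

Lemma Rach_le_of_Rprime_val D r : Rprime_val P d1 d2 D r -> Rach_le P d1 d2 D r.
Proof.
move=> Dr eps eps0; exists r; split; last lra.
have sum1 (F : 'I_1 -> R) : rsum F = F ord0 by rewrite /rsum big_ord1.
exists 1%nat, (fun _ => 1), (fun _ => D), (fun _ => r); rewrite !sum1.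
by do !split; rewrite ?Rmult_1_l // => _; lra.
Qed.

Variables (U1 U2 U12 : finType).
Local Notation O := (Omega U1 U2 U12 TX TY1 TY2).

Lemma valid_joint_resample_u2 (p : O -> R) :
  valid_joint P p -> valid_joint P (resample_u2 p).
Proof.
case=> [[p0 p1] [pXY pm]]; split; first split.
- exact: resample_u2_ge0.
- by rewrite resample_u2_sum.
split; last exact: resample_u2_markov.
by move=> x y1 y2; rewrite distr_resample_u2_xy.
Qed.

Lemma dist_ok_resample_u2 (p : O -> R) D :
  (forall w, 0 <= p w) ->
  markov p (fun w => (pu1 w, pu2 w, pu12 w)) (@px _ _ _ _ _ _) (fun w => (py1 w, py2 w)) ->
  dist_ok d1 d2 p D -> dist_ok d1 d2 (resample_u2 p) D.
Proof.
move=> p0 pm [g1 [g2 [dist1 dist2]]]; exists g1, g2; split.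
- by rewrite (expect_eq_distr (distr_resample_u2_view1 p0)
               (k := fun z => d1 z.1.2 (g1 z.1.1.2 z.1.1.1 z.2))).
- by rewrite (expect_eq_distr (distr_resample_u2_view2 p0 pm)
               (k := fun z => d2 z.1.2 (g2 z.1.1.2 z.1.1.1 z.2))).
Qed.

End Coding.

Lemma ord0_s1 : (ord0 \in s1) = true. Proof. by rewrite inE. Qed.
Lemma ord0_s2 : (ord0 \in s2) = false. Proof. by rewrite inE. Qed.
Lemma ord0_s12 : (ord0 \in s12) = true. Proof. by rewrite inE. Qed.
Lemma ord_max_s1 : ((ord_max : 'I_2) \in s1) = false. Proof. by rewrite inE. Qed.
Lemma ord_max_s2 : ((ord_max : 'I_2) \in s2) = true. Proof. by rewrite inE. Qed.
Lemma ord_max_s12 : ((ord_max : 'I_2) \in s12) = true. Proof. by rewrite inE. Qed.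

Lemma s1_neq_s2 : (s1 == s2) = false.
Proof. by apply/eqP => /setP/(_ ord0); rewrite ord0_s1 ord0_s2. Qed.
Lemma s1_neq_s12 : (s1 == s12) = false.
Proof. by apply/eqP => /setP/(_ ord_max); rewrite ord_max_s1 ord_max_s12. Qed.
Lemma s2_neq_s12 : (s2 == s12) = false.
Proof. by apply/eqP => /setP/(_ ord0); rewrite ord0_s2 ord0_s12. Qed.

Lemma s2_neq_s1 : (s2 == s1) = false. Proof. by rewrite eq_sym s1_neq_s2. Qed.
Lemma s12_neq_s1 : (s12 == s1) = false. Proof. by rewrite eq_sym s1_neq_s12. Qed.
Lemma s12_neq_s2 : (s12 == s2) = false. Proof. by rewrite eq_sym s2_neq_s12. Qed.

Definition subsetsE :=
  (ord0_s1, ord0_s2, ord0_s12, ord_max_s1, ord_max_s2, ord_max_s12, s1_neq_s2, s1_neq_s12,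
   s2_neq_s12, s2_neq_s1, s12_neq_s1, s12_neq_s2, eqxx).

Lemma rsum_in_subsets (Dp : {set {set 'I_2}}) (F : {set 'I_2} -> R) :
  (forall S, S != s1 -> S != s2 -> S != s12 -> F S = 0) ->
  rsum_in Dp F = (if s1 \in Dp then F s1 else 0) + (if s2 \in Dp then F s2 else 0)
               + (if s12 \in Dp then F s12 else 0).
Proof.
move=> F0; rewrite /rsum_in big_mkcond /= (bigD1 s1) //= (bigD1 s2) ?subsetsE //=.
rewrite (bigD1 s12) ?subsetsE //= big1; first by do 3 case: (_ \in Dp); ring.
by move=> S /andP [/andP [S1 S2] S12]; case: (S \in Dp) => //; exact: F0.
Qed.

Section BinningRates.
Variables (U1 U2 U12 TX TY1 TY2 : finType).
Local Notation O := (Omega U1 U2 U12 TX TY1 TY2).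
Local Notation pu1 := (@pu1 U1 U2 U12 TX TY1 TY2).
Local Notation pu2 := (@pu2 U1 U2 U12 TX TY1 TY2).
Local Notation pu12 := (@pu12 U1 U2 U12 TX TY1 TY2).
Local Notation px := (@px U1 U2 U12 TX TY1 TY2).
Local Notation py1 := (@py1 U1 U2 U12 TX TY1 TY2).
Local Notation py2 := (@py2 U1 U2 U12 TX TY1 TY2).
Variable q : O -> R.
Hypotheses (q0 : forall w, 0 <= q w) (q1 : rsum q = 1).
Hypothesis qm : markov q (fun w => (pu1 w, pu2 w, pu12 w)) px (fun w => (py1 w, py2 w)).
Hypothesis qci : markov q pu1y pu12x pu2.

(* By the chain rule, I(U1, U2, U12; Y1, Y2 | X) = 0 is a sum of nonnegative conditional
   mutual informations, among them the ones below. *)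
Lemma markov_Y1_split :
  cmutinfo q pu12 py1 px = 0 /\ cmutinfo q pu1 py1 (pairv pu12 px) = 0.
Proof.
have := markov_entropyE q0 qm.
have := cmutinfo_ge0 q0 q1 (fun w => (pu1 w, pu2 w, pu12 w)) py2 (pairv px py1).
have := cmutinfo_ge0 q0 q1 pu2 py1 (fun w => (pu12 w, pu1 w, px w)).
have := cmutinfo_ge0 q0 q1 pu12 py1 px.
have := cmutinfo_ge0 q0 q1 pu1 py1 (pairv pu12 px).
by canon_entropies; lra.
Qed.

Lemma markov_Y2_split :
  cmutinfo q pu12 py2 px = 0 /\ cmutinfo q pu2 py2 (pairv pu12 px) = 0.
Proof.
have := markov_entropyE q0 qm.
have := cmutinfo_ge0 q0 q1 (fun w => (pu1 w, pu2 w, pu12 w)) py1 (pairv px py2).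
have := cmutinfo_ge0 q0 q1 pu1 py2 (fun w => (pu12 w, pu2 w, px w)).
have := cmutinfo_ge0 q0 q1 pu12 py2 px.
have := cmutinfo_ge0 q0 q1 pu2 py2 (pairv pu12 px).
by canon_entropies; lra.
Qed.

Lemma condind_U2_U1 : cmutinfo q pu2 pu1 (pairv pu12 px) = 0.
Proof.
have := markov_entropyE q0 qci; rewrite /pu1y /pu12x.
have := cmutinfo_ge0 q0 q1 pu2 pu1 (pairv pu12 px).
have := cmutinfo_ge0 q0 q1 pu2 (fun w => (py1 w, py2 w)) (fun w => (pu1 w, pu12 w, px w)).
by canon_entropies; lra.
Qed.

Definition coding_order : seq {set 'I_2} := [:: s12; s1; s2].

Definition bin_rate (S : {set 'I_2}) : R :=
  if S == s12 then Rmin (mutinfo q pu12 py1) (mutinfo q pu12 py2)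
  else if S == s1 then mutinfo q pu1 (pairv pu12 py1)
  else if S == s2 then mutinfo q pu2 (pairv pu12 py2)
  else 0.

Definition cover_rate (S : {set 'I_2}) : R :=
  mutinfo q (pairv px (uvar (prevset coding_order S))) (uvar [set S]) - bin_rate S.

Lemma bin_rate_ge0 S : 0 <= bin_rate S.
Proof.
rewrite /bin_rate; case: ifP => _; first by apply: Rmin_glb; exact: mutinfo_ge0.
by do 2 (case: ifP => _; first exact: mutinfo_ge0); lra.
Qed.

Lemma cover_rate_ge0 S : 0 <= cover_rate S.
Proof.
rewrite /cover_rate /bin_rate /prevset /uvar.
case: eqP => [-> | _]; last case: eqP => [-> | _]; last case: eqP => [-> | _];
  rewrite ?inE ?subsetsE /= ?subsetsE /=.
- have := Rmin_l (mutinfo q pu12 py1) (mutinfo q pu12 py2).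
  have := markov_Y1_split; have := cmutinfo_ge0 q0 q1 pu12 px py1.
  by canon_entropies; lra.
- have := markov_Y1_split; have := cmutinfo_ge0 q0 q1 pu1 px (pairv pu12 py1).
  by canon_entropies; lra.
- have := markov_Y2_split; have := condind_U2_U1.
  have := cmutinfo_ge0 q0 q1 pu2 px (pairv pu12 py2).
  by canon_entropies; lra.
- by rewrite Rminus_0_r; exact: mutinfo_ge0.
Qed.

Lemma cover_rate_sum : cover_rate s1 + cover_rate s2 + cover_rate s12 = RT_rate q.
Proof.
have [XA1 XB1] := markov_Y1_split; have [XA2 XC2] := markov_Y2_split.
have XA_Y1 : cmutinfo q px pu12 py1 = mutinfo q px pu12 - mutinfo q pu12 py1.
  by move: XA1; canon_entropies; lra.
have XA_Y2 : cmutinfo q px pu12 py2 = mutinfo q px pu12 - mutinfo q pu12 py2.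
  by move: XA2; canon_entropies; lra.
rewrite /RT_rate XA_Y1 XA_Y2 Rmax_subr.
rewrite /cover_rate /bin_rate /prevset /uvar !inE ?subsetsE /= ?subsetsE /=.
by move: XB1 XC2 condind_U2_U1; canon_entropies; lra.
Qed.

Lemma bin_rate_other S : S != s1 -> S != s2 -> S != s12 -> bin_rate S = 0.
Proof. by move=> /negbTE S1 /negbTE S2 /negbTE S12; rewrite /bin_rate S1 S2 S12. Qed.

Lemma entropy_uvar_other S :
  S != s1 -> S != s2 -> S != s12 -> entropy q (uvar [set S]) = 0.
Proof.
move=> S1 S2 S12; rewrite /uvar !inE ![_ == S]eq_sym (negbTE S1) (negbTE S2) (negbTE S12).
exact: (entropy_cst q1 (None, None, None)).
Qed.

Lemma dec_constr_Y1 : dec_constr q ord0 py1 bin_rate.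
Proof.
move=> Dp _ Dp_sub.
have s2_Dp : (s2 \in Dp) = false.
  by apply/negbTE/negP => /(subsetP Dp_sub); rewrite inE ord0_s2.
rewrite (rsum_in_subsets Dp bin_rate_other) (rsum_in_subsets Dp entropy_uvar_other) s2_Dp.
have H0 : entropy q (subvec (false, false, false, false, false, false)) = 0 :=
  entropy_cst q1 (None, None, None, None, None, None).
have := Rmin_l (mutinfo q pu12 py1) (mutinfo q pu12 py2).
have := cmutinfo_ge0 q0 q1 pu12 pu1 py1.
rewrite /centropy /uvar /Dl !inE ?subsetsE s2_Dp /=.
case: (s1 \in Dp); case: (s12 \in Dp); rewrite /bin_rate ?subsetsE /=;
  by canon_entropies; rewrite ?H0; lra.
Qed.

Lemma dec_constr_Y2 : dec_constr q ord_max py2 bin_rate.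
Proof.
move=> Dp _ Dp_sub.
have s1_Dp : (s1 \in Dp) = false.
  by apply/negbTE/negP => /(subsetP Dp_sub); rewrite inE ord_max_s1.
rewrite (rsum_in_subsets Dp bin_rate_other) (rsum_in_subsets Dp entropy_uvar_other) s1_Dp.
have H0 : entropy q (subvec (false, false, false, false, false, false)) = 0 :=
  entropy_cst q1 (None, None, None, None, None, None).
have := Rmin_r (mutinfo q pu12 py1) (mutinfo q pu12 py2).
have := cmutinfo_ge0 q0 q1 pu12 pu2 py2.
rewrite /centropy /uvar /Dl !inE ?subsetsE s1_Dp /=.
case: (s2 \in Dp); case: (s12 \in Dp); rewrite /bin_rate ?subsetsE /=;
  by canon_entropies; rewrite ?H0; lra.
Qed.

End BinningRates.

Lemma Rprime_val_RT_rate (TX TY1 TY2 Xh1 Xh2 U1 U2 U12 : finType)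
    (P : TX * TY1 * TY2 -> R) (d1 : TX -> Xh1 -> R) (d2 : TX -> Xh2 -> R) D
    (q : Omega U1 U2 U12 TX TY1 TY2 -> R) :
  valid_joint P q -> dist_ok d1 d2 q D -> markov q pu1y pu12x (@pu2 _ _ _ _ _ _) ->
  Rprime_val P d1 d2 D (RT_rate q).
Proof.
move=> hq hd qci; have [[q0 q1] [_ qm]] := hq.
exists U1, U2, U12, q; do 2 split => //.
exists coding_order, (cover_rate q), (bin_rate q).
split; first by rewrite /perm_eq /= ?subsetsE.
split; last by rewrite cover_rate_sum.
split; first by move=> S _; split; [exact: cover_rate_ge0 | exact: bin_rate_ge0].
split; first by move=> S _; rewrite /cover_rate; lra.
by split; [exact: dec_constr_Y1 | exact: dec_constr_Y2].
Qed.

Theorem lemma1 (TX TY1 TY2 Xh1 Xh2 : finType) (P : TX * TY1 * TY2 -> R)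
  (d1 : TX -> Xh1 -> R) (d2 : TX -> Xh2 -> R) (D : R * R) :
  pmf P ->
  forall t : R, RT_val P d1 d2 D t -> Rach_le P d1 d2 D t.
Proof.
move=> _ t [U1 [U2 [U12 [p [hp [hd ->]]]]]].
have [[p0 _] [_ pm]] := hp.
apply: Rach_le_of_Rprime_val; rewrite -/(RT_rate p) -RT_rate_resample_u2 //.
apply: Rprime_val_RT_rate.
- exact: valid_joint_resample_u2.
- exact: dist_ok_resample_u2.
- exact: resample_u2_condind.
Qed.
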